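(* Let $q\ge 2$, $n$, $r\ge 1$, $\rho\ge 2$ and $d\ge 1$ be integers, and put $N=r+\rho-1$. Let $B(l,\rho)$, $l=0,1,2,\dots$, be a function with the following properties: (i) for every $l$, every $q$-ary code of length $l$ with minimum Hamming distance at least $\rho$ has at most $B(l,\rho)$ codewords; (ii) $B(0,\rho)=1$; (iii) $B(\cdot,\rho)$ is log-convex in $l$. Let $\mathcal{C}$ be a $q$-ary $(n,k,r,\rho)$ LRC code with minimum distance $d$, and let $$\mu=\mu(n,d,r,\rho):=\Big\lceil \frac{n-(d-1)}{N}\Big\rceil+1 .$$ Then $$k\le \mu\,\log_q B(N,\rho).$$
   Context: A $q$-ary code of length $n$ is a subset $\mathcal{C}\subseteq Q^n$ of a set $Q$ with $|Q|=q$; its minimum distance is the minimum Hamming distance between distinct codewords, and its dimension is $k=\log_q|\mathcal{C}|$ (not necessarily an integer). For $I\subseteq[n]=\{1,\dots,n\}$, $\mathcal{C}_I$ denotes the restriction (projection) of $\mathcal{C}$ to the coordinates in $I$. The code $\mathcal{C}$ of cardinality $q^k$ is an $(n,k,r,\rho)$ LRC code (has the $(\rho,r)$ locality property), $\rho\ge 2$, if every coordinate $i\in[n]$ is contained in a subset $\mathcal{R}_i\subseteq[n]$ of size at most $r+\rho-1$ such that the restricted code $\mathcal{C}_{\mathcal{R}_i}$ has minimum distance at least $\rho$. A positive function $f(j)$ of an integer argument is log-convex if $f(j_1)f(j_2)\le f(j_1-1)f(j_2+1)$ for all $j_1\le j_2$ in the support of $f$. *)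

From Stdlib Require Import Reals.
From mathcomp Require Import all_boot.
Set Implicit Arguments. Unset Strict Implicit. Unset Printing Implicit Defensive.

Definition dist_on (Q : finType) (n : nat) (I : {set 'I_n}) (x y : {ffun 'I_n -> Q}) : nat :=
  #|[set i in I | x i != y i]|.

Definition hdist (Q : finType) (n : nat) (x y : {ffun 'I_n -> Q}) : nat :=
  #|[set i | x i != y i]|.

(* the code has minimum distance at least rho (vacuous if |C| <= 1) *)
Definition min_dist_ge (Q : finType) (n : nat) (C : {set {ffun 'I_n -> Q}}) (rho : nat) : Prop :=
  forall x y, x \in C -> y \in C -> x != y -> rho <= hdist x y.

Definition has_min_dist (Q : finType) (n : nat) (C : {set {ffun 'I_n -> Q}}) (d : nat) : Prop :=
  min_dist_ge C d /\ exists x y, [/\ x \in C, y \in C, x != y & hdist x y = d].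

(* the restricted code C_I has minimum distance at least rho: two codewords
   whose restrictions to I are distinct differ in at least rho positions of I *)
Definition restr_min_dist_ge (Q : finType) (n : nat) (C : {set {ffun 'I_n -> Q}})
    (I : {set 'I_n}) (rho : nat) : Prop :=
  forall x y, x \in C -> y \in C -> 0 < dist_on I x y -> rho <= dist_on I x y.

Definition is_LRC (Q : finType) (n : nat) (C : {set {ffun 'I_n -> Q}}) (r rho : nat) : Prop :=
  forall i : 'I_n, exists R : {set 'I_n},
    [/\ i \in R, #|R| <= r + rho - 1 & restr_min_dist_ge C R rho].

Definition log_convex (f : nat -> R) : Prop :=
  (forall j, Rlt 0 (f j)) /\
  (forall j1 j2, 1 <= j1 -> j1 <= j2 -> Rle (Rmult (f j1) (f j2)) (Rmult (f (j1 - 1)) (f (j2 + 1)))).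

Definition logq (q : nat) (x : R) : R := Rdiv (ln x) (ln (INR q)).

Definition ceil_div (m a : nat) : nat := (m + a - 1) %/ a.

(* mu(n,d,r,rho) = ceil((n-(d-1))/N) + 1, N = r+rho-1 ; n - (d-1) >= 0 since d <= n *)
Definition mu (n d r rho : nat) : nat := ceil_div (n - (d - 1)) (r + rho - 1) + 1.

From Stdlib Require Import Reals Lra Psatz.
From mathcomp Require Import all_boot zify.
Set Implicit Arguments. Unset Strict Implicit. Unset Printing Implicit Defensive.

(* Grow a set S of coordinates greedily: while |S| < n - d + 1, add the
   recovery set R of a coordinate outside S.  Among the codewords with a fixed
   restriction to S, the restrictions to R \ S form a code of length
   |R \ S| <= N and distance >= rho, so |C_(S u R)| <= |C_S| B(|R \ S|).
   Log-convexity and B(0) = 1 make log B(l) / l nondecreasing, hence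
   N log |C_S| <= |S| log B(N) throughout.  The process stops with
   n - d + 1 <= |S| < n - d + 1 + N <= N mu, and any n - d + 1 coordinates
   determine a codeword, so |C| = |C_S|. *)

Section ImageCounting.

Variables (T U V : finType).

Lemma card_imset_le_fibers (f : T -> U) (g : T -> V) (A : {set T}) K :
  (forall v, #|f @: [set x in A | g x == v]| <= K) -> #|f @: A| <= #|g @: A| * K.
Proof.
move=> leK; pose P := [set f @: [set x in A | g x == v] | v in g @: A].
have sub : f @: A \subset cover P.
  apply/subsetP => _ /imsetP[a Aa ->]; apply/bigcupP.
  exists (f @: [set x in A | g x == g a]); first by do 2!apply: imset_f.
  by apply: imset_f; rewrite inE Aa eqxx.
apply: leq_trans (subset_leq_card sub) _; apply: leq_trans (leq_card_cover P) _.
apply: (@leq_trans (\sum_(X in P) K)); first by apply: leq_sum => _ /imsetP[v _ ->].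
by rewrite sum_nat_const leq_mul2r leq_imset_card orbT.
Qed.

Lemma card_imset_le_factor (f : T -> U) (w : T -> V) (A : {set T}) :
  {in A &, forall a b, w a = w b -> f a = f b} -> #|f @: A| <= #|w @: A|.
Proof.
move=> fw; case: (set_0Vmem A) => [->|[a0 _]]; first by rewrite !imset0 cards0.
pose h z := if [pick a in A | w a == z] is Some a then f a else f a0.
have -> : f @: A = h @: (w @: A).
  rewrite -imset_comp; apply: eq_in_imset => a Aa /=; rewrite /h.
  case: pickP => [b /andP[Ab /eqP wba]|/(_ a)]; first exact: fw.
  by rewrite Aa eqxx.
exact: leq_imset_card.
Qed.

End ImageCounting.

Section Restriction.

Variables (Q : finType) (n : nat).
Implicit Types (S R A : {set 'I_n}) (x y : {ffun 'I_n -> Q}).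

(* The restricted code C_S is represented inside {ffun 'I_n -> option Q}, with
   the coordinates outside S blanked to None. *)
Definition restr S x : {ffun 'I_n -> option Q} :=
  [ffun i => if i \in S then Some (x i) else None].

Definition word_on A x : {ffun 'I_#|A| -> Q} := [ffun j => x (enum_val j)].

Lemma restrP S x y : reflect {in S, forall i, x i = y i} (restr S x == restr S y).
Proof.
apply: (iffP eqP) => [eqxy i iS | eqxy].
  by move/ffunP/(_ i): eqxy; rewrite !ffunE iS => -[].
by apply/ffunP => i; rewrite !ffunE; case: ifP => // /eqxy ->.
Qed.

Lemma word_onP A x y : reflect {in A, forall i, x i = y i} (word_on A x == word_on A y).
Proof.
apply: (iffP eqP) => [eqxy i iA | eqxy].
  by move/ffunP/(_ (enum_rank_in iA i)): eqxy; rewrite !ffunE enum_rankK_in.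
by apply/ffunP => j; rewrite !ffunE eqxy // enum_valP.
Qed.

Lemma restr_setU S R x y :
  restr S x = restr S y -> word_on (R :\: S) x = word_on (R :\: S) y ->
  restr (S :|: R) x = restr (S :|: R) y.
Proof.
move=> /eqP/restrP eqS /eqP/word_onP eqRS; apply/eqP/restrP => i /setUP[iS|iR].
  exact: eqS.
by case: (boolP (i \in S)) => [/eqS | iNS] //; apply: eqRS; rewrite inE iNS.
Qed.

Lemma dist_on_le_hdist_word_on S R x y : restr S x = restr S y ->
  dist_on R x y <= hdist (word_on (R :\: S) x) (word_on (R :\: S) y).
Proof.
move=> /eqP/restrP eqS.
have sub : [set i in R | x i != y i] \subset
    enum_val @: [set j | word_on (R :\: S) x j != word_on (R :\: S) y j].
  apply/subsetP => i; rewrite inE => /andP[iR neq].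
  have iRS : i \in R :\: S by rewrite inE iR andbT; apply: contra neq => /eqS ->.
  apply/imsetP; exists (enum_rank_in iRS i); last by rewrite enum_rankK_in.
  by rewrite inE !ffunE enum_rankK_in.
apply: leq_trans (subset_leq_card sub) _.
by rewrite card_imset //; apply: enum_val_inj.
Qed.

Lemma dist_on_gt0 R A x y :
  A \subset R -> word_on A x != word_on A y -> 0 < dist_on R x y.
Proof.
move=> AR /word_onP neq; apply/card_gt0P.
case: (pickP [pred i in A | x i != y i]) => [i /andP[iA xy] | none].
  by exists i; rewrite inE (subsetP AR).
by case: neq => i iA; apply/eqP; move: (none i); rewrite /= iA => /negbFE.
Qed.

Variable C : {set {ffun 'I_n -> Q}}.

Definition fiber S (z : {ffun 'I_n -> option Q}) := [set x in C | restr S x == z].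

Lemma card_restr_setU_fiber S R z :
  #|restr (S :|: R) @: fiber S z| <= #|word_on (R :\: S) @: fiber S z|.
Proof.
apply: card_imset_le_factor => x y; rewrite !inE => /andP[_ /eqP xz] /andP[_ /eqP yz].
by apply: restr_setU; rewrite xz yz.
Qed.

Lemma min_dist_word_on_fiber S R rho z : restr_min_dist_ge C R rho ->
  min_dist_ge (word_on (R :\: S) @: fiber S z) rho.
Proof.
move=> CR _ _ /imsetP[x + ->] /imsetP[y + ->].
rewrite !inE => /andP[xC /eqP xz] /andP[yC /eqP yz] neq.
have eqS : restr S x = restr S y by rewrite xz yz.
apply: leq_trans (dist_on_le_hdist_word_on R eqS).
by apply: CR => //; apply: dist_on_gt0 (subsetDl R S) neq.
Qed.

Lemma restr_inj S d : min_dist_ge C d -> n < #|S| + d -> {in C &, injective (restr S)}.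
Proof.
move=> Cd lt_n x y xC yC /eqP/restrP eqS; apply/eqP; apply: contraT => neq.
have sub : [set i | x i != y i] \subset ~: S.
  by apply/subsetP => i; rewrite !inE; apply: contra => /eqS ->.
have := leq_trans (Cd x y xC yC neq) (subset_leq_card sub).
by rewrite -(leq_add2l #|S|) cardsC card_ord leqNgt lt_n.
Qed.

Variables (rho : nat) (B : nat -> R).
Hypothesis B_bound : forall l (D : {set {ffun 'I_l -> Q}}),
  min_dist_ge D rho -> Rle (INR #|D|) (B l).

Lemma card_restr_setU_le S R : restr_min_dist_ge C R rho ->
  Rle (INR #|restr (S :|: R) @: C|) (Rmult (INR #|restr S @: C|) (B #|R :\: S|)).
Proof.
move=> CR; pose K := \max_z #|restr (S :|: R) @: fiber S z|.
have leK : #|restr (S :|: R) @: C| <= #|restr S @: C| * K.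
  by apply: card_imset_le_fibers => z; apply: leq_bigmax.
have [z0 Kz0] : {z0 | K = #|restr (S :|: R) @: fiber S z0|}.
  by apply: eq_bigmax; apply/card_gt0P; exists [ffun=> None].
have KB : Rle (INR K) (B #|R :\: S|).
  apply: Rle_trans _ _ _ _ (B_bound (min_dist_word_on_fiber (S := S) (z := z0) CR)).
  by rewrite Kz0; apply/le_INR/leP/card_restr_setU_fiber.
apply: Rle_trans _ _ _ (le_INR _ _ (leP leK)) _; rewrite mult_INR.
by apply: Rmult_le_compat_l => //; apply: pos_INR.
Qed.

End Restriction.

Section LogConvexity.

Local Open Scope R_scope.

Lemma ln_le x y : 0 < x -> x <= y -> ln x <= ln y.
Proof. by move=> x0 [/(ln_increasing _ _ x0) lt | ->]; [left | right]. Qed.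

Lemma ln_le_mul_bound a b c : 0 < a -> 0 < c -> a <= b * c -> ln a <= ln b + ln c.
Proof.
move=> a0 c0 le_abc; have b0 : 0 < b by nra.
by rewrite -ln_mult //; apply: ln_le.
Qed.

Lemma convex_seq_chord (g : nat -> R) : g 0%N = 0 ->
  (forall j, 2 * g j.+1 <= g j + g j.+2) ->
  forall l N, (l <= N)%N -> INR N * g l <= INR l * g N.
Proof.
move=> g0 g_convex.
have slope l : INR l.+1 * g l <= INR l * g l.+1.
  elim: l => [|l IH]; first by rewrite g0 /=; lra.
  by have := g_convex l; have := pos_INR l; rewrite !S_INR in IH *; nra.
move=> l N /subnKC <-; elim: (_ - l)%N => [|m IH]; first by rewrite addn0; lra.
rewrite addnS; have := slope (l + m)%N; rewrite S_INR.
have [/eqP | lm_gt0] := posnP (l + m).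
  by rewrite addn_eq0 => /andP[/eqP -> _]; rewrite g0 /=; lra.
have := lt_0_INR _ (ltP lm_gt0); have := pos_INR l; nra.
Qed.

Lemma log_convex_ln_chord (B : nat -> R) : log_convex B -> B 0%N = 1 ->
  forall l N, (l <= N)%N -> INR N * ln (B l) <= INR l * ln (B N).
Proof.
case=> B_gt0 B_lc B0; apply: convex_seq_chord; first by rewrite B0 ln_1.
move=> j; have := B_lc j.+1 j.+1 (ltn0Sn _) (leqnn _); rewrite subn1 addn1 => le_B.
have -> : 2 * ln (B j.+1) = ln (B j.+1) + ln (B j.+1) by ring.
by rewrite -!ln_mult //; apply: ln_le le_B; apply: Rmult_lt_0_compat.
Qed.

Lemma logq_le_of_ln_le q c b (N s m : nat) : (1 < q)%N -> (0 < N)%N -> (s <= N * m)%N ->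
  0 <= ln b -> INR N * ln c <= INR s * ln b -> logq q c <= INR m * logq q b.
Proof.
move=> q_gt1 N_gt0 le_s b_ge0 le_c.
have lnq_gt0 : 0 < ln (INR q) by rewrite -ln_1; apply: ln_increasing; [lra | apply/lt_1_INR/ltP].
have N_pos : 0 < INR N by apply/lt_0_INR/ltP.
have le_sNm : INR s <= INR N * INR m by rewrite -mult_INR; apply/le_INR/leP.
have : ln c <= INR m * ln b by nra.
rewrite /logq /Rdiv -Rmult_assoc => le_ln.
by apply: Rmult_le_compat_r le_ln; apply/Rlt_le/Rinv_0_lt_compat.
Qed.

End LogConvexity.

Lemma code_bound_ge1 (Q : finType) (a : Q) rho (B : nat -> R) :
  (forall l (D : {set {ffun 'I_l -> Q}}), min_dist_ge D rho -> Rle (INR #|D|) (B l)) ->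
  forall l, Rle R1 (B l).
Proof.
move=> B_bound l; have := B_bound l [set [ffun=> a]]; rewrite cards1; apply.
by move=> x y; rewrite !inE => /eqP -> /eqP ->; rewrite eqxx.
Qed.

Lemma cardsU_setD (T : finType) (A B : {set T}) : #|A :|: B| = #|A| + #|B :\: A|.
Proof. by rewrite cardsU cardsD setIC addnBA // subset_leq_card ?subsetIl. Qed.

Lemma leq_ceil_div m a : 0 < a -> m <= ceil_div m a * a.
Proof. by move=> a_gt0; have := ltn_ceil (m + a - 1) a_gt0; rewrite /ceil_div; lia. Qed.

Section GreedyCover.

Variables (Q : finType) (n : nat) (C : {set {ffun 'I_n -> Q}}) (r rho : nat) (B : nat -> R).
Hypotheses (B_bound : forall l (D : {set {ffun 'I_l -> Q}}),
              min_dist_ge D rho -> Rle (INR #|D|) (B l))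
           (B0 : B 0 = R1) (B_lc : log_convex B)
           (C_LRC : is_LRC C r rho) (C_neq0 : C != set0).

Local Notation N := (r + rho - 1).
Local Open Scope R_scope.

Definition rate_bounded (S : {set 'I_n}) : Prop :=
  INR N * ln (INR #|restr S @: C|) <= INR #|S| * ln (B N).

Lemma rate_bounded_set0 : rate_bounded set0.
Proof.
rewrite /rate_bounded; case/set0Pn: C_neq0 => x0 x0C.
have -> : restr set0 @: C = [set restr set0 x0].
  apply/setP => z; rewrite inE; apply/imsetP/eqP => [[x _ ->] | ->]; last by exists x0.
  by apply/eqP/restrP => i; rewrite inE.
by rewrite cards1 cards0 /= ln_1; lra.
Qed.

Lemma rate_bounded_setU S R : restr_min_dist_ge C R rho -> (#|R| <= N)%N ->
  rate_bounded S -> rate_bounded (S :|: R).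
Proof.
rewrite /rate_bounded => CR R_le rate_S.
have RS_le : (#|R :\: S| <= N)%N by apply: leq_trans R_le; apply/subset_leq_card/subsetDl.
have img_gt0 : 0 < INR #|restr (S :|: R) @: C|.
  by apply/lt_0_INR/ltP; rewrite card_gt0 imset_eq0.
have := ln_le_mul_bound img_gt0 (B_lc.1 _) (card_restr_setU_le B_bound S CR).
have := log_convex_ln_chord B_lc B0 RS_le.
rewrite cardsU_setD plus_INR; have := pos_INR N; nra.
Qed.

Hypothesis N_gt0 : (0 < N)%N.

Lemma exists_rate_bounded_set k : (k <= n)%N ->
  exists S : {set 'I_n}, [/\ (k <= #|S|)%N, (#|S| < k + N)%N & rate_bounded S].
Proof.
elim: k => [_ | k IH lt_kn].
  by exists set0; rewrite cards0 add0n; split => //; apply: rate_bounded_set0.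
have [S [le_kS lt_S rate_S]] := IH (ltnW lt_kn).
have [lt_kS | le_Sk] := ltnP k #|S|.
  by exists S; split => //; rewrite addSn ltnS ltnW.
have /card_gt0P[i] : (0 < #|~: S|)%N by have := cardsC S; rewrite card_ord; lia.
rewrite inE => iNS; have [R [iR R_le CR]] := C_LRC i.
have RS_gt0 : (0 < #|R :\: S|)%N by apply/card_gt0P; exists i; rewrite inE iNS.
have RS_le : (#|R :\: S| <= N)%N by apply: leq_trans R_le; apply/subset_leq_card/subsetDl.
exists (S :|: R); rewrite cardsU_setD; split; [lia | lia | exact: rate_bounded_setU].
Qed.

End GreedyCover.

Theorem theorem1 (q n r rho d : nat) (Q : finType) (hQ : #|Q| = q)
  (hq : 2 <= q) (hr : 1 <= r) (hrho : 2 <= rho) (hd : 1 <= d)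
  (B : nat -> R)
  (HB : forall (l : nat) (D : {set {ffun 'I_l -> Q}}),
          min_dist_ge D rho -> Rle (INR #|D|) (B l))
  (HB0 : B 0 = R1)
  (HBlc : log_convex B)
  (C : {set {ffun 'I_n -> Q}})
  (HC : is_LRC C r rho)
  (Hd : has_min_dist C d) :
  Rle (logq q (INR #|C|)) (Rmult (INR (mu n d r rho)) (logq q (B (r + rho - 1)))).
Proof.
have N_gt0 : 0 < r + rho - 1 by lia.
have C_neq0 : C != set0 by case: Hd => _ [x [_ [xC _ _ _]]]; apply/set0Pn; exists x.
have /card_gt0P[a _] : 0 < #|Q| by rewrite hQ; lia.
have [S [le_S lt_S rate_S]] :=
  exists_rate_bounded_set HB HB0 HBlc HC C_neq0 N_gt0 (leq_subr (d - 1) n).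
have restr_S_inj : {in C &, injective (restr S)} by apply: restr_inj Hd.1 _; lia.
rewrite /rate_bounded (card_in_imset restr_S_inj) in rate_S.
apply: (logq_le_of_ln_le hq N_gt0 _ _ rate_S).
  by have := leq_ceil_div (n - (d - 1)) N_gt0; rewrite /mu; lia.
by rewrite -ln_1; apply: ln_le Rlt_0_1 (code_bound_ge1 a HB _).
Qed.
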